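(* For every $\theta\in\mathbb{R}$, integer $m\ge1$, $x=x_1\cdots x_m\in\{0,1\}^m$ and one-qubit state $|\psi\rangle$, $$\langle x|_{1\ldots m}\,(M_{m,\theta}^\dagger)_{1\ldots m}\prod_{i=1}^m\mathrm{CNOT}_{i,m+1}\,|+\rangle^{\otimes m}\otimes|\psi\rangle=\langle x|_{1\ldots m}\prod_{i=1}^m(A_\theta^\dagger)_i\,\mathrm{CNOT}_{i,m+1}\,|+\rangle^{\otimes m}\otimes|\psi\rangle .$$
   Context: $X$ is the Pauli-$X$ matrix, $|+\rangle=(|0\rangle+|1\rangle)/\sqrt2$, $\mathrm{CNOT}_{i,j}$ has control $i$ and target $j$, and $\langle x|_{1\ldots m}$ is the partial inner product on qubits $1,\dots,m$. $A_\theta=|0\rangle\langle0|+e^{-i\theta X}|1\rangle\langle1|$. $M_{m,\theta}$ is the (non-unitary) $m$-qubit operator defined on basis states by $M_{m,\theta}|x_1\cdots x_m\rangle=\bigotimes_{j=1}^m e^{-i\theta x_{j-1}X}|x_j\rangle$, with indices mod $m$ (so $x_0=x_m$). *)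

From HB Require Import structures.
From mathcomp Require Import all_boot all_order all_algebra.
From mathcomp Require Import complex.
From mathcomp Require Import reals trigo.
Set Implicit Arguments. Unset Strict Implicit. Unset Printing Implicit Defensive.
Import Order.TTheory GRing.Theory Num.Theory.
Local Open Scope ring_scope.
Local Open Scope complex_scope.

Section Qubits.
Variable R : realType.
Local Notation C := (complex R).

Definition basis (n : nat) := {ffun 'I_n -> bool}.
(* vectors of (C^2)^{⊗n}, as amplitude functions on basis strings *)
Definition qstate (n : nat) := basis n -> C.
(* (possibly non-unitary) operators on n qubits, as matrices indexed by basis strings:
   op A b c = <b| A |c> *)
Definition qop (n : nat) := basis n -> basis n -> C.
Definition qstate1 := bool -> C.
Definition qop1 := bool -> bool -> C.

Definition b2C (b : bool) : C := (b%:R)%R.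

Definition apply n (A : qop n) (v : qstate n) : qstate n :=
  fun b => \sum_(c : basis n) A b c * v c.
Definition opmul n (A B : qop n) : qop n :=
  fun b c => \sum_(d : basis n) A b d * B d c.
Definition opid n : qop n := fun b c => b2C (b == c).
Definition opprod n (s : seq (qop n)) : qop n := foldr (@opmul n) (@opid n) s.
Definition qadj n (A : qop n) : qop n := fun b c => (A c b)^*.
Definition qadj1 (A : qop1) : qop1 := fun b c => (A c b)^*.

(* Pauli X and e^{-i t X} = cos t I - i sin t X *)
Definition pauliX : qop1 := fun b c => b2C (b != c).
Definition expX (t : R) : qop1 :=
  fun b c => (cos t)%:C * b2C (b == c) - 'i * (sin t)%:C * pauliX b c.
(* A_theta = |0><0| + e^{-i theta X} |1><1| *)
Definition Atheta (theta : R) : qop1 :=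
  fun b c => if c then expX theta b true else b2C (b == false).

Definition on_qubit n (k : 'I_n) (U : qop1) : qop n :=
  fun b c => U (b k) (c k) * b2C [forall j, (j != k) ==> (b j == c j)].

Definition cnot_map n (i t : 'I_n) (c : basis n) : basis n :=
  [ffun j => if j == t then c t (+) c i else c j].
Definition CNOT n (i t : 'I_n) : qop n := fun b c => b2C (b == cnot_map i t c).

(* M_{m,theta} |x_1..x_m> = ⊗_j e^{-i theta x_{j-1} X} |x_j>, indices mod m *)
Definition Mop m (theta : R) : qop m :=
  fun b c => \prod_(j : 'I_m) expX (theta * ((c (ord_pred j))%:R : R)) (b j) (c j).

(* qubits 1..m are indices 0..m-1 of 'I_m.+1; qubit m+1 is ord_max *)
Definition init_part m (b : basis m.+1) : basis m :=
  [ffun j : 'I_m => b (widen_ord (leqnSn m) j)].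
Definition join_last m (x : basis m) (t : bool) : basis m.+1 :=
  [ffun j : 'I_m.+1 => if unlift ord_max j is Some k then x k else t].

Definition on_first m (A : qop m) : qop m.+1 :=
  fun b c => A (init_part b) (init_part c) * b2C (b ord_max == c ord_max).

Definition plus_tensor m (psi : qstate1) : qstate m.+1 :=
  fun b => ((Num.sqrt (2 : R))^-1 ^+ m)%:C * psi (b ord_max).

Definition partial_bra m (x : basis m) (Phi : qstate m.+1) : qstate1 :=
  fun t => Phi (join_last x t).

Definition qb m (i : 'I_m) : 'I_m.+1 := widen_ord (leqnSn m) i.

End Qubits.

Arguments apply {R n}.
Arguments opmul {R n}.
Arguments opid {R n}.
Arguments opprod {R n}.
Arguments qadj {R n}.
Arguments qadj1 {R}.
Arguments pauliX {R}.
Arguments on_qubit {R n}.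
Arguments CNOT {R n}.
Arguments on_first {R m}.
Arguments partial_bra {R m}.

From HB Require Import structures.
From mathcomp Require Import all_boot all_order all_algebra.
From mathcomp Require Import complex.
From mathcomp Require Import reals trigo.
From mathcomp Require Import ring.
From Stdlib Require Import FunctionalExtensionality.
Set Implicit Arguments. Unset Strict Implicit.
Import Order.TTheory GRing.Theory Num.Theory.
Local Open Scope ring_scope.
Local Open Scope complex_scope.

(* Both sides have the form sum_d K(x, d) 2^(-m/2) psi(t + d_1 + ... + d_m), sums
   of bits taken mod 2: the CNOTs write the parity of the first m qubits into the
   last one, and on the right each A_theta^dagger commutes with the CNOTs of the
   other controls, so the A_theta^dagger act after all CNOTs, as a tensor power.
   A function of the parity is a combination of 1 and (-1)^parity, so it suffices
   to compare sum_d K(x, d) prod_i s^(d_i) for s = 1 and s = -1.  Both kernels are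
   tensor products, so these sums factor over the qubits; (1, s) is an eigenvector
   of X, hence of e^(i theta X) with eigenvalue e^(i s theta), and both sides
   become prod_j (s e^(i s theta))^(x_j), for M after the cyclic shift j - 1 -> j. *)

Section QubitOperators.
Variable R : realType.
Local Notation C := (complex R).
Local Notation b2C := (b2C R).

Lemma b2C_andb a b : b2C (a && b) = b2C a * b2C b.
Proof. by case: a; rewrite /b2C /= ?mul1r ?mul0r. Qed.

Lemma big_b2C_eq n (d : basis n) (F : basis n -> C) :
  \sum_(c : basis n) b2C (c == d) * F c = F d.
Proof.
rewrite (bigD1 d) //= eqxx mul1r big1 ?addr0 // => c /negbTE ->.
by rewrite mul0r.
Qed.

Lemma apply_opmul n (A B : qop R n) v : apply (opmul A B) v = apply A (apply B v).
Proof.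
apply: functional_extensionality => b; rewrite /apply /opmul.
under eq_bigr do rewrite big_distrl.
rewrite exchange_big; apply: eq_bigr => d _; rewrite big_distrr.
by apply: eq_bigr => c _; apply/esym/mulrA.
Qed.

Lemma apply_opid n (v : qstate R n) : apply opid v = v.
Proof.
apply: functional_extensionality => b; rewrite /apply /opid.
by under eq_bigr do rewrite eq_sym; rewrite big_b2C_eq.
Qed.

Lemma apply_opprod_cons n (A : qop R n) s v :
  apply (opprod (A :: s)) v = apply A (apply (opprod s) v).
Proof. exact: apply_opmul. Qed.

Definition op_comm n (A B : qop R n) :=
  forall v, apply A (apply B v) = apply B (apply A v).

Lemma op_comm_opprod n (I : eqType) (A : qop R n) (B : I -> qop R n) s :
  {in s, forall i, op_comm A (B i)} -> op_comm A (opprod (map B s)).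
Proof.
elim: s => [|i s IHs] AB v /=; first by rewrite !apply_opid.
rewrite !apply_opmul (AB i (mem_head _ _)) IHs // => j js.
by apply: AB; rewrite in_cons js orbT.
Qed.

Lemma apply_opprod_mul_split n (I : eqType) (A B : I -> qop R n) s v :
  uniq s -> (forall i j, i != j -> op_comm (B i) (A j)) ->
  apply (opprod [seq opmul (A i) (B i) | i <- s]) v =
  apply (opprod (map A s)) (apply (opprod (map B s)) v).
Proof.
elim: s v => [|i s IHs] v /=; first by rewrite !apply_opid.
case/andP => iNs s_uniq BA; rewrite !apply_opmul IHs // op_comm_opprod // => j js.
by apply: BA; apply: contraNneq iNs => ->.
Qed.

Lemma cnot_mapK n (i t : 'I_n) : i != t -> involutive (cnot_map i t).
Proof.
move=> it c; apply/ffunP => k; rewrite !ffunE.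
case: (k =P t) => [->|//]; rewrite eqxx (negbTE it).
by rewrite -addbA addbb addbF.
Qed.

Lemma apply_CNOT n (i t : 'I_n) (v : qstate R n) b : i != t ->
  apply (CNOT i t) v b = v (cnot_map i t b).
Proof.
move=> it; rewrite /apply /CNOT.
by under eq_bigr do rewrite eq_sym (inv_eq (cnot_mapK it)); rewrite big_b2C_eq.
Qed.

Definition set_bit n (b : basis n) (k : 'I_n) (e : bool) : basis n :=
  [ffun j => if j == k then e else b j].

Lemma eq_set_bit n (b c : basis n) k e :
  (c == set_bit b k e) = [forall j, (j != k) ==> (b j == c j)] && (c k == e).
Proof.
apply/eqP/andP => [-> | [/forallP bc /eqP ce]].
  split; last by rewrite ffunE eqxx.
  by apply/forallP => j; apply/implyP => jk; rewrite ffunE (negbTE jk).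
apply/ffunP => j; rewrite ffunE; case: eqP => [->//|/eqP jk].
by apply/esym/eqP; move/implyP: (bc j); apply.
Qed.

Lemma apply_on_qubit n (k : 'I_n) (U : qop1 R) (v : qstate R n) b :
  apply (on_qubit k U) v b = \sum_(e : bool) U (b k) e * v (set_bit b k e).
Proof.
transitivity (\sum_(c : basis n) \sum_(e : bool)
    b2C (c == set_bit b k e) * (U (b k) e * v (set_bit b k e))); last first.
  by rewrite exchange_big; apply: eq_bigr => e _; rewrite big_b2C_eq.
apply: eq_bigr => c _.
have subst_c e : b2C (c == set_bit b k e) * (U (b k) e * v (set_bit b k e)) =
                 b2C (c == set_bit b k e) * (U (b k) (c k) * v c).
  by case: eqP => [->|_]; rewrite ?ffunE ?eqxx ?mul0r.
rewrite big_bool /= !subst_c !eq_set_bit /on_qubit.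
by case: (c k); case: [forall _, _];
  rewrite /b2C /= ?mul0r ?mul1r ?mulr0 ?mulr1 ?addr0 ?add0r ?mul0r.
Qed.

Lemma op_comm_CNOT_on_qubit n (k i t : 'I_n) (U : qop1 R) :
  k != t -> k != i -> i != t -> op_comm (CNOT i t) (on_qubit k U).
Proof.
move=> kt ki it w; apply: functional_extensionality => b.
rewrite apply_CNOT // !apply_on_qubit; apply: eq_bigr => e _.
have cnot_k : cnot_map i t b k = b k by rewrite ffunE (negbTE kt).
rewrite apply_CNOT // cnot_k; congr (_ * w _).
apply/ffunP => j; rewrite !ffunE (eq_sym t) (eq_sym i) (negbTE kt) (negbTE ki).
by case: (j =P k) => [->|//]; rewrite (negbTE kt).
Qed.

Lemma forall_notin_cons_set_bit n (b c : basis n) k s e : k \notin s ->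
  [forall j, (j \notin s) ==> (c j == set_bit b k e j)] =
  (c k == e) && [forall j, (j \notin k :: s) ==> (c j == b j)].
Proof.
move=> ks; apply/forallP/andP => [cb|[/eqP ce /forallP cb] j].
  split; first by move: (cb k); rewrite ks ffunE eqxx.
  apply/forallP => j; apply/implyP; rewrite in_cons negb_or => /andP[jk js].
  by move: (cb j); rewrite js ffunE (negbTE jk).
apply/implyP => js; rewrite ffunE; case: (j =P k) => [->|/eqP jk]; first by rewrite ce.
by move: (cb j); rewrite in_cons (negbTE jk) js.
Qed.

Lemma apply_on_qubits n (U : qop1 R) (s : seq 'I_n) (v : qstate R n) b : uniq s ->
  apply (opprod [seq on_qubit k U | k <- s]) v b =
  \sum_(c : basis n) b2C [forall j, (j \notin s) ==> (c j == b j)]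
       * (\prod_(k <- s) U (b k) (c k)) * v c.
Proof.
elim: s v b => [|k s IHs] v b /=.
  move=> _; rewrite apply_opid -(big_b2C_eq b v); apply: eq_bigr => c _.
  rewrite big_nil mulr1; congr (b2C _ * _).
  by apply/eqP/forallP => [-> j|cb]; last apply/ffunP => j; apply/eqP.
case/andP => ks s_uniq; rewrite apply_opmul apply_on_qubit.
transitivity (\sum_(e : bool) \sum_(c : basis n) U (b k) e * (b2C (c k == e) *
   (b2C [forall j, (j \notin k :: s) ==> (c j == b j)] * (\prod_(l <- s) U (b l) (c l)) * v c))).
  apply: eq_bigr => e _; rewrite IHs // big_distrr; apply: eq_bigr => c _ /=.
  rewrite forall_notin_cons_set_bit // b2C_andb.
  have -> : \prod_(l <- s) U (set_bit b k e l) (c l) = \prod_(l <- s) U (b l) (c l).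
    apply: eq_big_seq => l ls; rewrite ffunE.
    by case: eqP => // lk; rewrite -lk ls in ks.
  ring.
rewrite exchange_big; apply: eq_bigr => c _ /=.
by rewrite big_bool big_cons; case: (c k); rewrite /b2C /=; ring.
Qed.

Lemma qb_neq_max m (i : 'I_m) : qb i != ord_max.
Proof. by rewrite -val_eqE /= neq_ltn ltn_ord. Qed.

Lemma qb_inj m : injective (@qb m).
Proof. by move=> i j /(congr1 val) /= /val_inj. Qed.

Lemma lift_max_qb m (i : 'I_m) : lift ord_max i = qb i.
Proof. exact/val_inj/lift_max. Qed.

Lemma notin_qb m (j : 'I_m.+1) : (j \notin [seq qb i | i <- enum 'I_m]) = (j == ord_max).
Proof.
case: (unliftP ord_max j) => [k ->|->].
  by rewrite lift_max_qb (negbTE (qb_neq_max k)) map_f ?mem_enum.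
by rewrite eqxx; apply/mapP => -[i _ /eqP]; rewrite eq_sym (negbTE (qb_neq_max i)).
Qed.

Lemma join_last_max m (x : basis m) t : join_last x t ord_max = t.
Proof. by rewrite ffunE unlift_none. Qed.

Lemma join_last_qb m (x : basis m) t i : join_last x t (qb i) = x i.
Proof. by rewrite ffunE -lift_max_qb liftK. Qed.

Lemma init_part_join m (x : basis m) t : init_part (join_last x t) = x.
Proof. by apply/ffunP => j; rewrite ffunE; exact: join_last_qb. Qed.

Lemma join_init_part m (c : basis m.+1) : join_last (init_part c) (c ord_max) = c.
Proof.
apply/ffunP => j; rewrite ffunE; case: unliftP => [k ->|->] //.
by rewrite ffunE lift_max_qb.
Qed.

Lemma sum_last_bit m t (F : basis m.+1 -> C) :
  \sum_(c : basis m.+1) b2C (c ord_max == t) * F c = \sum_(d : basis m) F (join_last d t).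
Proof.
rewrite (reindex (fun p : basis m * bool => join_last p.1 p.2)) /=; last first.
  apply: onW_bij; exists (fun c => (init_part c, c ord_max)) => [[d e]|c] /=.
    by rewrite init_part_join join_last_max.
  by rewrite join_init_part.
rewrite -(pair_big xpredT xpredT
  (fun d e => b2C (join_last d e ord_max == t) * F (join_last d e))) /=.
apply: eq_bigr => d _; rewrite big_bool /= !join_last_max.
by case: t; rewrite /b2C /= ?mul1r ?mul0r ?addr0 ?add0r.
Qed.

Lemma partial_bra_on_first m (A : qop R m) (x : basis m) (Phi : qstate R m.+1) t :
  partial_bra x (apply (on_first A) Phi) t =
  \sum_(d : basis m) A x d * Phi (join_last d t).
Proof.
rewrite (eq_bigr (fun d => A x (init_part (join_last d t)) * Phi (join_last d t))) => [|d _];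
  last by rewrite init_part_join.
rewrite -(sum_last_bit t (fun c => A x (init_part c) * Phi c)); apply: eq_bigr => c _.
by rewrite /on_first init_part_join join_last_max eq_sym; ring.
Qed.

Definition tensor_pow m (U : qop1 R) : qop R m :=
  fun b c => \prod_(i : 'I_m) U (b i) (c i).

Lemma apply_on_qubits_on_first m (U : qop1 R) (v : qstate R m.+1) :
  apply (opprod [seq on_qubit (qb i) U | i <- enum 'I_m]) v =
  apply (on_first (tensor_pow U)) v.
Proof.
apply: functional_extensionality => b.
rewrite (map_comp (fun k => on_qubit k U)) apply_on_qubits; last first.
  by rewrite map_inj_uniq ?enum_uniq //; exact: qb_inj.
apply: eq_bigr => c _; rewrite /on_first /tensor_pow big_map big_enum /=.
have -> : [forall j, (j \notin [seq qb i | i <- enum 'I_m]) ==> (c j == b j)] =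
          (b ord_max == c ord_max).
  apply/forallP/eqP => [cb|bc j]; first by move: (cb ord_max); rewrite notin_qb eqxx => /eqP.
  by rewrite notin_qb; apply/implyP => /eqP ->; rewrite bc.
rewrite (eq_bigr (fun i => U (init_part b i) (init_part c i))) => [|i _]; last by rewrite !ffunE.
ring.
Qed.

Definition parity m (d : basis m) : bool := \big[addb/false]_(i < m) d i.

Lemma apply_CNOTs_parity m (s : seq 'I_m) (phi : bool -> C) :
  apply (opprod [seq CNOT (qb i) ord_max | i <- s]) (fun b : basis m.+1 => phi (b ord_max)) =
  fun b => phi (b ord_max (+) \big[addb/false]_(i <- s) b (qb i)).
Proof.
elim: s => [|i s IHs] /=.
  by rewrite apply_opid; apply: functional_extensionality => b; rewrite big_nil addbF.
rewrite apply_opmul IHs; apply: functional_extensionality => b.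
rewrite apply_CNOT ?qb_neq_max // big_cons ffunE eqxx addbA; congr (phi (_ (+) _)).
by apply: eq_bigr => j _; rewrite ffunE (negbTE (qb_neq_max j)).
Qed.

Lemma apply_CNOTs_join_last m (phi : bool -> C) (d : basis m) t :
  apply (opprod [seq CNOT (qb i) ord_max | i <- enum 'I_m])
    (fun b : basis m.+1 => phi (b ord_max)) (join_last d t) = phi (t (+) parity d).
Proof.
rewrite apply_CNOTs_parity join_last_max big_enum /parity.
by congr (phi (t (+) _)); apply: eq_bigr => i _; rewrite join_last_qb.
Qed.

End QubitOperators.

Section Signs.
Variable R : realType.
Local Notation C := (complex R).

Definition eig_phase (theta : R) (s : C) : C := (cos theta)%:C + 'i * (sin theta)%:C * s.

Lemma eig_phase_bit theta s (a : bool) : eig_phase (theta * a%:R) s = eig_phase theta s ^+ a.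
Proof. by case: a; rewrite /eig_phase ?mulr1 ?mulr0 ?cos0 ?sin0 //; simpc. Qed.

Lemma sum_adj_expX_sign t (s : C) c : s = 1 \/ s = -1 ->
  \sum_(e : bool) (expX t e c)^* * s ^+ e = s ^+ c * eig_phase t s.
Proof.
by rewrite big_bool; case=> ->; case: c; rewrite /expX /pauliX /eig_phase /b2C /=; simpc.
Qed.

Lemma sum_adj_Atheta_sign theta (s : C) c : s = 1 \/ s = -1 ->
  \sum_(e : bool) (Atheta theta e c)^* * s ^+ e = (s * eig_phase theta s) ^+ c.
Proof.
by rewrite big_bool; case=> ->; case: c; rewrite /Atheta /expX /pauliX /eig_phase /b2C /=; simpc.
Qed.

Lemma sum_adj_Mop_signs m (theta : R) (x : basis m) (s : C) : s = 1 \/ s = -1 ->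
  \sum_(d : basis m) qadj (@Mop R m theta) x d * \prod_(i < m) s ^+ d i =
  \prod_(i < m) (s * eig_phase theta s) ^+ x i.
Proof.
move=> s_sign; transitivity (\prod_(i < m) \sum_(e : bool)
    (expX (theta * (x (ord_pred i))%:R) e (x i))^* * s ^+ e).
  rewrite bigA_distr_bigA; apply: eq_bigr => d _.
  by rewrite /qadj /Mop rmorph_prod big_split.
under eq_bigr do rewrite sum_adj_expX_sign // eig_phase_bit.
have shift_x : \prod_(i < m) eig_phase theta s ^+ x (ord_pred i) =
                \prod_(i < m) eig_phase theta s ^+ x i.
  by rewrite [RHS](reindex_inj (@ord_pred_inj m)).
rewrite big_split /= shift_x -big_split.
by apply: eq_bigr => i _; rewrite exprMn.
Qed.

Lemma sum_tensor_adj_Atheta_signs m (theta : R) (x : basis m) (s : C) : s = 1 \/ s = -1 ->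
  \sum_(d : basis m) tensor_pow (qadj1 (Atheta theta)) x d * \prod_(i < m) s ^+ d i =
  \prod_(i < m) (s * eig_phase theta s) ^+ x i.
Proof.
move=> s_sign; under [RHS]eq_bigr do rewrite -sum_adj_Atheta_sign //.
rewrite bigA_distr_bigA; apply: eq_bigr => d _.
by rewrite /tensor_pow /qadj1 big_split.
Qed.

Lemma sign_parity m (d : basis m) : (-1) ^+ parity d = \prod_(i < m) (-1 : C) ^+ d i.
Proof.
exact: (@big_morph _ _ (fun b : bool => (-1 : C) ^+ b) 1 *%R false addb (@signr_addb C)
          (expr0 _)).
Qed.

Lemma eq_sum_parity m (K1 K2 : basis m -> C) (f : bool -> C) :
  (forall s : C, s = 1 \/ s = -1 ->
     \sum_(d : basis m) K1 d * \prod_(i < m) s ^+ d i =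
     \sum_(d : basis m) K2 d * \prod_(i < m) s ^+ d i) ->
  \sum_(d : basis m) K1 d * f (parity d) = \sum_(d : basis m) K2 d * f (parity d).
Proof.
move=> eqK.
have f_sign u : f u = (f false + f true) / 2 + (f false - f true) / 2 * (-1) ^+ u.
  by case: u; field.
have sum_f K : \sum_(d : basis m) K d * f (parity d) =
    (f false + f true) / 2 * \sum_(d : basis m) K d * \prod_(i < m) 1 ^+ d i +
    (f false - f true) / 2 * \sum_(d : basis m) K d * \prod_(i < m) (-1) ^+ d i.
  rewrite !mulr_sumr -big_split /=; apply: eq_bigr => d _.
  have prod1 : \prod_(i < m) (1 : C) ^+ d i = 1 by apply: big1 => i _; exact: expr1n.
  by rewrite f_sign sign_parity prod1; ring.
by rewrite !sum_f !eqK //; [right | left].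
Qed.

End Signs.

Unset Implicit Arguments.

Theorem lemma4p4 (R : realType) (theta : R) (m : nat) (hm : (1 <= m)%N)
  (x : basis m) (psi : qstate1 R)
  (hpsi : `|psi false| ^+ 2 + `|psi true| ^+ 2 = 1) :
  partial_bra x
    (apply (opprod (on_first (qadj (@Mop R m theta))
                    :: [seq CNOT (qb i) ord_max | i <- enum 'I_m]))
           (@plus_tensor R m psi))
  =
  partial_bra x
    (apply (opprod [seq opmul (on_qubit (qb i) (qadj1 (@Atheta R theta)))
                              (CNOT (qb i) ord_max) | i <- enum 'I_m])
           (@plus_tensor R m psi)).
Proof.
apply: functional_extensionality => t.
have CNOT_U_comm i j : i != j ->
    op_comm (CNOT (qb i) ord_max) (on_qubit (qb j) (qadj1 (Atheta theta))).
  move=> ij; apply: op_comm_CNOT_on_qubit; rewrite ?qb_neq_max //.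
  by apply: contraNneq ij => /qb_inj ->.
rewrite apply_opprod_cons partial_bra_on_first.
rewrite apply_opprod_mul_split ?enum_uniq //; last exact: CNOT_U_comm.
rewrite apply_on_qubits_on_first partial_bra_on_first.
under eq_bigr do rewrite (apply_CNOTs_join_last (fun u => _ * psi u)).
under [RHS]eq_bigr do rewrite (apply_CNOTs_join_last (fun u => _ * psi u)).
apply: (eq_sum_parity (fun u => _ * psi (t (+) u))) => s s_sign.
by rewrite sum_adj_Mop_signs // sum_tensor_adj_Atheta_signs.
Qed.
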